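(* Let $b>\tfrac12$ and $m\in\mathbb Z$, and define the functions $f(t)=\vartheta_3(\pi t+2\pi bm,\,ib)$ and $g(t)=\vartheta_3(\pi t,\,ib)$ for $t\in\mathbb R$. Then $$\sup_{t\in\mathbb R}|f(t)-g(t)|\le 8\pi|m|\,(b-\tfrac12)\sum_{k=1}^\infty k\,e^{-\pi bk^2}.$$
   Context: For $z,t\in\mathbb C$ with $\operatorname{Im}t>0$: $\vartheta_3(z,t)=\sum_{n\in\mathbb Z}e^{\pi i t n^2}e^{2izn}$. *)

From Stdlib Require Import Reals ZArith.
From Coquelicot Require Import Coquelicot.
Open Scope R_scope.

Definition Cexp (z : C) : C :=
  (exp (Re z) * cos (Im z), exp (Re z) * sin (Im z)).

(* Sum of a complex series sum_{n >= 0} a n, computed componentwise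
   (C = R * R): real part = sum of real parts, imaginary part = sum of
   imaginary parts; this is the usual sum whenever the series converges. *)
Definition CSeries (a : nat -> C) : C :=
  (Series (fun n => Re (a n)), Series (fun n => Im (a n))).

Definition CSeriesZ (a : Z -> C) : C :=
  (CSeries (fun n => a (Z.of_nat n)) + CSeries (fun n => a (- Z.of_nat (S n))%Z))%C.

Definition theta3 (z t : C) : C :=
  CSeriesZ (fun n : Z =>
    (Cexp (RtoC PI * Ci * t * RtoC (IZR n) ^ 2) * Cexp (2 * Ci * z * RtoC (IZR n)))%C).

Definition Series1 (a : nat -> R) : R := Series (fun k => a (S k)).

(* For real [x] the theta series at [t = i b] is the real Fourier series
   [theta3(x, i b) = 1 + 2 sum_{k>=1} e^{-pi b k^2} cos (2 k x)], which is
   [pi]-periodic and, since [cos] is 1-Lipschitz, Lipschitz in [x] with constant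
   [4 sum_{k>=1} k e^{-pi b k^2}].  Writing the shift as
   [2 pi b m = pi m + 2 pi (b - 1/2) m], periodicity removes [pi m] and the
   Lipschitz bound applied to the remaining shift gives the estimate. *)

From Stdlib Require Import Reals ZArith Lra Psatz.
From Coquelicot Require Import Coquelicot.
Open Scope R_scope.

Lemma cos_period_Z (x : R) (k : Z) : cos (x + 2 * IZR k * PI) = cos x.
Proof.
  destruct k as [|p|p].
  - now rewrite Rmult_0_r, Rmult_0_l, Rplus_0_r.
  - rewrite <- (positive_nat_Z p), <- INR_IZR_INZ; apply cos_period.
  - rewrite <- Pos2Z.opp_pos, opp_IZR, <- (positive_nat_Z p), <- INR_IZR_INZ.
    rewrite <- (cos_period _ (Pos.to_nat p)).
    f_equal; ring.
Qed.

Lemma Rabs_cos_sub_le (u v : R) : Rabs (cos u - cos v) <= Rabs (u - v).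
Proof.
  destruct (MVT_abs cos (fun c => - sin c) v u) as [c [-> _]].
  { intros; apply derivable_pt_lim_cos. }
  rewrite Rabs_Ropp.
  pose proof (Rabs_pos (u - v)).
  assert (Rabs (sin c) <= 1) by apply Rabs_le, SIN_bound.
  nra.
Qed.

Lemma Rabs_Series_le (a u : nat -> R) :
  (forall n, Rabs (a n) <= u n) -> ex_series u -> Rabs (Series a) <= Series u.
Proof.
  intros a_le_u u_ex.
  assert (abs_ex : ex_series (fun n => Rabs (a n))).
  { apply (ex_series_le (V := R_CompleteNormedModule) _ u); [|exact u_ex].
    intro n; change (Rabs (Rabs (a n)) <= u n); rewrite Rabs_Rabsolu; apply a_le_u. }
  apply (Rle_trans _ _ _ (Series_Rabs a abs_ex)).
  apply Series_le; [|exact u_ex].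
  intro n; split; [apply Rabs_pos | apply a_le_u].
Qed.

Definition theta_cos (b x y : R) : R := exp (- PI * b * y ^ 2) * cos (2 * x * y).
Definition theta_sin (b x y : R) : R := exp (- PI * b * y ^ 2) * sin (2 * x * y).

Definition theta_real (b x : R) : R :=
  1 + 2 * Series1 (fun k => theta_cos b x (INR k)).

Lemma theta_cos_opp (b x y : R) : theta_cos b x (- y) = theta_cos b x y.
Proof.
  unfold theta_cos.
  replace (2 * x * - y) with (- (2 * x * y)) by ring.
  now rewrite cos_neg, <- Rsqr_pow2, <- Rsqr_neg, Rsqr_pow2.
Qed.

Lemma theta_sin_opp (b x y : R) : theta_sin b x (- y) = - theta_sin b x y.
Proof.
  unfold theta_sin.
  replace (2 * x * - y) with (- (2 * x * y)) by ring.
  rewrite sin_neg, <- Rsqr_pow2, <- Rsqr_neg, Rsqr_pow2; ring.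
Qed.

Lemma theta3_term_imag_axis (b x : R) (n : Z) :
  (Cexp (RtoC PI * Ci * ((0, b) : C) * RtoC (IZR n) ^ 2) *
   Cexp (2 * Ci * RtoC x * RtoC (IZR n)))%C
  = (theta_cos b x (IZR n), theta_sin b x (IZR n)).
Proof.
  replace (RtoC PI * Ci * ((0, b) : C) * RtoC (IZR n) ^ 2)%C
    with ((- PI * b * IZR n ^ 2, 0) : C)
    by (unfold Cpow, Cmult, RtoC, Ci; simpl; f_equal; ring).
  replace (2 * Ci * RtoC x * RtoC (IZR n))%C with ((0, 2 * x * IZR n) : C)
    by (unfold Cmult, RtoC, Ci; simpl; f_equal; ring).
  unfold Cexp, Cmult, theta_cos, theta_sin; simpl.
  rewrite cos_0, sin_0, exp_0; f_equal; ring.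
Qed.

Lemma theta_real_shift_pi (b x : R) (m : Z) :
  theta_real b (x + PI * IZR m) = theta_real b x.
Proof.
  unfold theta_real, Series1; do 2 f_equal.
  apply Series_ext; intro n; unfold theta_cos; f_equal.
  rewrite <- (cos_period_Z (2 * x * INR (S n)) (m * Z.of_nat (S n))), mult_IZR,
    <- INR_IZR_INZ.
  f_equal; ring.
Qed.

Lemma theta_cos_sub_le (b x y k : R) : 0 <= k ->
  Rabs (theta_cos b y k - theta_cos b x k)
    <= 2 * Rabs (y - x) * (k * exp (- PI * b * k ^ 2)).
Proof.
  intros k_ge0; unfold theta_cos.
  rewrite <- Rmult_minus_distr_l, Rabs_mult, (Rabs_pos_eq (exp _))
    by (left; apply exp_pos).
  pose proof (Rabs_cos_sub_le (2 * y * k) (2 * x * k)) as cos_le.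
  replace (2 * y * k - 2 * x * k) with ((y - x) * (2 * k)) in cos_le by ring.
  rewrite Rabs_mult, (Rabs_pos_eq (2 * k)) in cos_le by lra.
  pose proof (exp_pos (- PI * b * k ^ 2)).
  nra.
Qed.

Section GaussianWeights.

Variable b : R.
Hypothesis hb : 1 / 2 < b.

(* [pi b > 3/2] is what makes [e^{-1/2}] a common geometric majorant. *)
Lemma gauss_weight_le_geom (n : nat) :
  (1 + INR n) * exp (- PI * b * INR n ^ 2) <= exp (- 1 / 2) ^ n.
Proof.
  assert (geom_eq : exp (- 1 / 2) ^ n = exp (- INR n / 2)).
  { induction n as [|n IH]; simpl pow.
    - simpl; replace (- 0 / 2) with 0 by field; now rewrite exp_0.
    - rewrite IH, <- exp_plus, S_INR; f_equal; field. }
  rewrite geom_eq.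
  apply (Rle_trans _ (exp (INR n) * exp (- PI * b * INR n ^ 2))).
  { apply Rmult_le_compat_r; [left; apply exp_pos | apply exp_ineq1_le]. }
  rewrite <- exp_plus.
  assert (exponent_le : INR n + - PI * b * INR n ^ 2 <= - INR n / 2).
  { pose proof PI2_3_2; pose proof (pos_INR n).
    assert (INR n <= INR n ^ 2).
    { destruct n as [|n]; [simpl; lra|]. pose proof (pos_INR n). rewrite S_INR; nra. }
    assert (3 / 2 < PI * b) by nra.
    nra. }
  destruct exponent_le as [lt | ->]; [left; now apply exp_increasing | now right].
Qed.

Lemma ex_series_gauss_dom (a : nat -> R) :
  (forall n, Rabs (a n) <= (1 + INR n) * exp (- PI * b * INR n ^ 2)) ->
  ex_series a.
Proof.
  intros a_le.
  apply (ex_series_le (V := R_CompleteNormedModule) a (fun n => exp (- 1 / 2) ^ n)).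
  - intro n; apply (Rle_trans _ _ _ (a_le n)), gauss_weight_le_geom.
  - apply ex_series_geom.
    rewrite Rabs_pos_eq by (left; apply exp_pos).
    rewrite <- exp_0; apply exp_increasing; lra.
Qed.

Lemma Rabs_theta_trig_le (x : R) (trig : R -> R) (n : nat) :
  Rabs (trig (2 * x * INR n)) <= 1 ->
  Rabs (exp (- PI * b * INR n ^ 2) * trig (2 * x * INR n))
    <= (1 + INR n) * exp (- PI * b * INR n ^ 2).
Proof.
  intros trig_le.
  rewrite Rabs_mult, (Rabs_pos_eq (exp _)) by (left; apply exp_pos).
  pose proof (exp_pos (- PI * b * INR n ^ 2)); pose proof (pos_INR n).
  nra.
Qed.

Lemma ex_series_theta_cos (x : R) : ex_series (fun n => theta_cos b x (INR n)).
Proof.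
  apply ex_series_gauss_dom; intro n.
  apply Rabs_theta_trig_le, Rabs_le, COS_bound.
Qed.

Lemma ex_series_theta_sin (x : R) : ex_series (fun n => theta_sin b x (INR n)).
Proof.
  apply ex_series_gauss_dom; intro n.
  apply Rabs_theta_trig_le, Rabs_le, SIN_bound.
Qed.

Lemma ex_series_gauss_moment :
  ex_series (fun k => INR (S k) * exp (- PI * b * INR (S k) ^ 2)).
Proof.
  apply (ex_series_incr_1 (fun k => INR k * exp (- PI * b * INR k ^ 2))).
  apply ex_series_gauss_dom; intro n.
  pose proof (exp_pos (- PI * b * INR n ^ 2)); pose proof (pos_INR n).
  rewrite Rabs_pos_eq; nra.
Qed.

Lemma theta3_imag_axis (x : R) :
  theta3 (RtoC x) ((0, b) : C) = RtoC (theta_real b x).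
Proof.
  unfold theta3.
  set (a := fun n : Z => (Cexp (RtoC PI * Ci * ((0, b) : C) * RtoC (IZR n) ^ 2) *
                          Cexp (2 * Ci * RtoC x * RtoC (IZR n)))%C).
  unfold CSeriesZ, CSeries.
  assert (a_nat : forall n, a (Z.of_nat n) = (theta_cos b x (INR n), theta_sin b x (INR n)))
    by (intro n; unfold a; now rewrite theta3_term_imag_axis, <- INR_IZR_INZ).
  assert (a_neg : forall n, a (- Z.of_nat n)%Z
                            = (theta_cos b x (INR n), - theta_sin b x (INR n))).
  { intro n; unfold a.
    now rewrite theta3_term_imag_axis, opp_IZR, <- INR_IZR_INZ,
      theta_cos_opp, theta_sin_opp. }
  rewrite (Series_ext _ _ (fun n => f_equal Re (a_nat n))),
    (Series_ext _ _ (fun n => f_equal Im (a_nat n))),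
    (Series_ext _ _ (fun n => f_equal Re (a_neg (S n)))),
    (Series_ext _ _ (fun n => f_equal Im (a_neg (S n)))); cbn [Re Im fst snd].
  rewrite Series_opp, (Series_incr_1 _ (ex_series_theta_cos x)),
    (Series_incr_1 _ (ex_series_theta_sin x)).
  unfold theta_real, Series1, RtoC, Cplus; cbn [fst snd]; change (INR 0) with 0.
  unfold theta_cos at 1, theta_sin at 1; rewrite !Rmult_0_r, cos_0, sin_0.
  replace (- PI * b * 0 ^ 2) with 0 by ring; rewrite exp_0.
  f_equal; ring.
Qed.

Lemma theta_real_lipschitz (x y : R) :
  Rabs (theta_real b y - theta_real b x)
    <= 4 * Rabs (y - x) * Series1 (fun k => INR k * exp (- PI * b * INR k ^ 2)).
Proof.
  assert (shifted_ex : forall z, ex_series (fun k => theta_cos b z (INR (S k))))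
    by (intro z; apply (ex_series_incr_1 (fun k => theta_cos b z (INR k))),
                       ex_series_theta_cos).
  assert (affine : forall A B, 1 + 2 * A - (1 + 2 * B) = 2 * (A - B)) by (intros; ring).
  unfold theta_real, Series1; rewrite affine, <- Series_minus by apply shifted_ex.
  rewrite Rabs_mult, (Rabs_pos_eq 2) by lra.
  replace (4 * Rabs (y - x)) with (2 * (2 * Rabs (y - x))) by ring.
  rewrite Rmult_assoc, <- Series_scal_l; apply Rmult_le_compat_l; [lra|].
  apply Rabs_Series_le.
  - intro n; apply theta_cos_sub_le, pos_INR.
  - apply (ex_series_scal_l (V := R_NormedModule)), ex_series_gauss_moment.
Qed.

End GaussianWeights.

Theorem lemma6p1 (b : R) (m : Z) (hb : 1 / 2 < b) :
  let f := fun t : R => theta3 (RtoC (PI * t + 2 * PI * b * IZR m)) ((0, b) : C) in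
  let g := fun t : R => theta3 (RtoC (PI * t)) ((0, b) : C) in
  forall t : R,
    Cmod (f t - g t)%C <=
    8 * PI * Rabs (IZR m) * (b - 1 / 2) *
      Series1 (fun k : nat => INR k * exp (- PI * b * INR k ^ 2)).
Proof.
  intros f g t; unfold f, g.
  rewrite !theta3_imag_axis by exact hb.
  replace (RtoC _ - RtoC _)%C
    with (RtoC (theta_real b (PI * t + 2 * PI * b * IZR m) - theta_real b (PI * t)))
    by (unfold RtoC, Cminus, Cplus, Copp; simpl; f_equal; ring).
  rewrite Cmod_R.
  replace (PI * t + 2 * PI * b * IZR m)
    with (PI * t + 2 * PI * (b - 1 / 2) * IZR m + PI * IZR m) by field.
  rewrite theta_real_shift_pi.
  eapply Rle_trans; [apply theta_real_lipschitz, hb|].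
  replace (PI * t + 2 * PI * (b - 1 / 2) * IZR m - PI * t)
    with ((2 * PI * (b - 1 / 2)) * IZR m) by ring.
  pose proof PI_RGT_0.
  rewrite Rabs_mult, (Rabs_pos_eq (2 * PI * (b - 1 / 2))) by nra.
  right; ring.
Qed.
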